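(* For every BIMS channel with capacity $C$ and every rate $R\ge0$, the random coding exponent satisfies $$E_{\rm r}^{\rm bsc}(R;C)\le E_{\rm r}(R)\le E_{\rm r}^{\rm bec}(R;C).$$
   Context: A BIMS (binary-input memoryless symmetric) channel is a memoryless channel with input alphabet $\{x_0,x_1\}$, finite output alphabet $\mathcal Y$ and transition probabilities $P_{Y|X}(y|x)$. It is symmetric in Gallager's sense: the columns of the $2\times|\mathcal Y|$ transition matrix (rows indexed by inputs) can be partitioned into submatrices such that, in each submatrix, every row is a permutation of every other row and every column is a permutation of every other column. Inputs are equiprobable and logarithms are base 2. The capacity $C$ is $I(X;Y)$ under equiprobable inputs. For $\rho>-1$, $$F(\rho)=\sum_{x}\tfrac12\sum_{y:\,P_{Y|X}(y|x)>0}P_{Y|X}(y|x)\left(\frac{\tfrac12\sum_{x'}P_{Y|X}(y|x')^{1/(1+\rho)}}{P_{Y|X}(y|x)^{1/(1+\rho)}}\right)^{\rho},$$ and $E_0(\rho)=-\log F(\rho)$. The random coding exponent is $E_{\rm r}(R)=\max_{0\le\rho\le1}\bigl(E_0(\rho)-\rho R\bigr)$. $h$ is the binary entropy function and $h^{-1}$ its inverse on $[0,\tfrac12]$. Define $$F^{\rm bec}(\rho;C)=1+(2^{-\rho}-1)C,$$ $$F^{\rm bsc}(\rho;C)=2^{-\rho}\bigl(\varepsilon^{1/(1+\rho)}+(1-\varepsilon)^{1/(1+\rho)}\bigr)^{1+\rho},\qquad \varepsilon=h^{-1}(1-C).$$ Then $$E_{\rm r}^{\rm bec}(R;C)=\max_{0\le\rho\le1}\bigl(-\log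 F^{\rm bec}(\rho;C)-\rho R\bigr),\qquad E_{\rm r}^{\rm bsc}(R;C)=\max_{0\le\rho\le1}\bigl(-\log F^{\rm bsc}(\rho;C)-\rho R\bigr)$$ are the random coding exponents of the BEC and of the BSC of capacity $C$. *)

From Stdlib Require Import Reals List Permutation Arith Classical ClassicalEpsilon.
Open Scope R_scope.

Definition log2 (x : R) : R := ln x / ln 2.

(* a^b for a >= 0, with the convention 0^b = 0 (b > 0 throughout) *)
Definition rpow (a b : R) : R := if Rle_dec a 0 then 0 else Rpower a b.

(* A binary-input channel with output alphabet {0,...,n-1}:
   W x y = P_{Y|X}(y|x), inputs x0 = false, x1 = true. *)
Definition sumY (n : nat) (f : nat -> R) : R :=
  fold_right Rplus 0 (map f (seq 0 n)).

Definition sumX (f : bool -> R) : R := f false + f true.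

Definition is_channel (n : nat) (W : bool -> nat -> R) : Prop :=
  (forall x y, (y < n)%nat -> 0 <= W x y) /\
  (forall x, sumY n (W x) = 1).

(* Gallager symmetry: the columns are partitioned into classes (cls y = class
   of column y); within each class, row x1 is a permutation of row x0, and
   every column (a vector of length 2) is a permutation of every other one. *)
Definition gallager_symmetric (n : nat) (W : bool -> nat -> R) : Prop :=
  exists cls : nat -> nat,
    (forall k : nat,
       Permutation
         (map (W false) (filter (fun y => Nat.eqb (cls y) k) (seq 0 n)))
         (map (W true) (filter (fun y => Nat.eqb (cls y) k) (seq 0 n)))) /\
    (forall y y', (y < n)%nat -> (y' < n)%nat -> cls y = cls y' ->
       (W false y = W false y' /\ W true y = W true y') \/
       (W false y = W true y' /\ W true y = W false y')).

Definition sumYpos (n : nat) (W : bool -> nat -> R) (x : bool) (g : nat -> R) : R :=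
  sumY n (fun y => if Rlt_dec 0 (W x y) then g y else 0).

(* capacity = I(X;Y) with equiprobable inputs *)
Definition capacity (n : nat) (W : bool -> nat -> R) : R :=
  sumX (fun x => / 2 * sumYpos n W x (fun y =>
     W x y * log2 (W x y / (/ 2 * sumX (fun x' => W x' y))))).

Definition F (n : nat) (W : bool -> nat -> R) (rho : R) : R :=
  sumX (fun x => / 2 * sumYpos n W x (fun y =>
     W x y * Rpower
        ((/ 2 * sumX (fun x' => rpow (W x' y) (/ (1 + rho))))
           / rpow (W x y) (/ (1 + rho))) rho)).

Definition E0 (n : nat) (W : bool -> nat -> R) (rho : R) : R :=
  - log2 (F n W rho).

(* max over rho in [0,1] (realised as the least upper bound, which is attained
   for the continuous functions considered here) *)
Definition max01 (f : R -> R) : R :=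
  epsilon (inhabits 0)
    (fun m => is_lub (fun v => exists rho, 0 <= rho <= 1 /\ v = f rho) m).

Definition Er (n : nat) (W : bool -> nat -> R) (Rt : R) : R :=
  max01 (fun rho => E0 n W rho - rho * Rt).

Definition h (p : R) : R := - p * log2 p - (1 - p) * log2 (1 - p).

Definition hinv (v : R) : R :=
  epsilon (inhabits 0) (fun e => 0 <= e <= / 2 /\ h e = v).

Definition F_bec (rho C : R) : R := 1 + (Rpower 2 (- rho) - 1) * C.

Definition F_bsc (rho C : R) : R :=
  let eps := hinv (1 - C) in
  Rpower 2 (- rho) *
  Rpower (rpow eps (/ (1 + rho)) + rpow (1 - eps) (/ (1 + rho))) (1 + rho).

Definition Er_bec (Rt C : R) : R := max01 (fun rho => - log2 (F_bec rho C) - rho * Rt).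
Definition Er_bsc (Rt C : R) : R := max01 (fun rho => - log2 (F_bsc rho C) - rho * Rt).

(* Every output letter y of a binary-input channel contributes a column
   (a, b) = (W(y|x0), W(y|x1)) that behaves like a BSC with crossover
   p_y = a/(a+b) and weight (a+b)/2; Gallager's F(rho) and the capacity split
   accordingly (column_F_eq, column_C_eq):
     F(rho) = sum_y (a+b)/2 * f_rho(p_y),   C = sum_y (a+b)/2 * (1 - h(p_y)),
   where f_rho = bsc_F rho is F of the BSC.  Everything then rests on the shape
   of f_rho as a function of the entropy h(p):
   - it lies above the chord from (h = 0, 2^-rho) to (h = 1, 1), which summed
     over the columns gives F >= F_bec(rho; C)            (bsc_F_above_chord);
   - it is concave in h: at every p0 in (0,1/2] it has a supporting line of
     nonnegative slope; summing the line at p0 = h^-1(1 - C) gives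
     F <= F_bsc(rho; C) (Jensen)                           (bsc_F_supporting_line).
   Concavity means that dF/dh decreases in p, which after the substitution
   x = ln((1-p)/p) is the one-variable inequality slope_profile_incr.
   As -log2 is decreasing, these bounds on F order the functions E0 pointwise
   in rho, hence their maxima over [0,1]. *)

From Stdlib Require Import Reals List Permutation Arith Classical ClassicalEpsilon.
From Stdlib Require Import Lra Lia Ranalysis5.
From Coquelicot Require Import Coquelicot.
Open Scope R_scope.

Lemma ln2_pos : 0 < ln 2.
Proof. rewrite <- ln_1. apply ln_increasing; lra. Qed.

Lemma ln_lt_0 x : 0 < x < 1 -> ln x < 0.
Proof. intros. rewrite <- ln_1. apply ln_increasing; lra. Qed.

Lemma ln_le_pred y : 0 < y -> ln y <= y - 1.
Proof. intros. assert (H1 := exp_ineq1_le (ln y)). rewrite exp_ln in H1 by auto. lra. Qed.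

Lemma ln_div x y : 0 < x -> 0 < y -> ln (x / y) = ln x - ln y.
Proof. intros. unfold Rdiv. rewrite ln_mult, ln_Rinv; try lra. apply Rinv_0_lt_compat; auto. Qed.

Lemma exp_lt_1 x : x < 0 -> exp x < 1.
Proof. intros. rewrite <- exp_0. apply exp_increasing. auto. Qed.

Lemma exp_le_mono x y : x <= y -> exp x <= exp y.
Proof. intros [Hlt|Heq]; [left; apply exp_increasing; exact Hlt|rewrite Heq; lra]. Qed.

Lemma exp_sub x y : exp (x - y) = exp x * / exp y.
Proof. unfold Rminus. rewrite exp_plus, exp_Ropp. reflexivity. Qed.

(* A Pade-type bound: e^y (2 - y) <= 2 + y for y >= 0.  The
   derivative of the difference is 1 + e^y (y - 1) >= 0. *)
Lemma exp_pade_bound y : 0 <= y -> exp y * (2 - y) <= 2 + y.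
Proof.
  intros Hy. destruct (Req_dec y 0) as [->|Hy0]; [rewrite exp_0; lra|].
  set (g := fun z => 2 + z - exp z * (2 - z)).
  assert (Hd : forall c, 0 <= c <= y -> derivable_pt_lim g c (1 + exp c * (c - 1))).
  { intros c _. apply is_derive_Reals. unfold g. auto_derive; auto. ring. }
  destruct (MVT_cor2 g _ 0 y ltac:(lra) Hd) as [c [Hc1 Hc2]].
  assert (Hp : 0 <= 1 + exp c * (c - 1)).
  { assert (H1 := exp_ineq1_le (- c)).
    assert (H2 : exp (- c) * exp c = 1)
      by (rewrite <- exp_plus; replace (- c + c) with 0 by ring; apply exp_0).
    assert (H3 := exp_pos c). nra. }
  unfold g in Hc1. rewrite exp_0 in Hc1. nra.
Qed.

Lemma nondecreasing_of_derive (f f' : R -> R) a b : a <= b ->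
  (forall c, a <= c <= b -> is_derive f c (f' c)) ->
  (forall c, a < c < b -> 0 <= f' c) -> f a <= f b.
Proof.
  intros Hab Hd Hpos. destruct (Req_dec a b) as [<-|Hne]; [lra|].
  destruct (MVT_cor2 f f' a b ltac:(lra)) as [c [Hc1 Hc2]].
  { intros c Hc. apply is_derive_Reals, Hd. exact Hc. }
  assert (0 <= f' c) by (apply Hpos; lra). nra.
Qed.

Lemma log2_le x y : 0 < x -> x <= y -> log2 x <= log2 y.
Proof.
  intros. unfold log2, Rdiv. assert (H1 := ln2_pos).
  apply Rmult_le_compat_r. left; apply Rinv_0_lt_compat; auto. apply ln_le; auto.
Qed.

Lemma log2_Rpower2 r : log2 (Rpower 2 r) = r.
Proof. unfold log2. rewrite ln_Rpower. assert (H := ln2_pos). field. lra. Qed.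

Lemma Rpower2_opp_le_1 r : 0 <= r -> Rpower 2 (- r) <= 1.
Proof. intros Hr. unfold Rpower. rewrite <- exp_0. apply exp_le_mono. assert (H2 := ln2_pos). nra. Qed.

(** * Binary entropy *)

Definition log_odds (p : R) : R := ln (1 - p) - ln p.

Lemma log_odds_pos p : 0 < p < / 2 -> 0 < log_odds p.
Proof. intros. unfold log_odds. assert (ln p < ln (1 - p)) by (apply ln_increasing; lra). lra. Qed.

Lemma log_odds_decr p p' : 0 < p -> p < p' -> p' < 1 -> log_odds p' < log_odds p.
Proof.
  intros. unfold log_odds. assert (ln p < ln p') by (apply ln_increasing; lra).
  assert (ln (1 - p') < ln (1 - p)) by (apply ln_increasing; lra). lra.
Qed.

Lemma h_derive p : 0 < p < 1 -> is_derive h p (log_odds p / ln 2).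
Proof.
  intros Hp. unfold h, log2, log_odds. assert (H := ln2_pos).
  auto_derive. repeat split; lra. replace (1 + - p) with (1 - p) by ring. field. repeat split; lra.
Qed.

Lemma h_sym p : h (1 - p) = h p.
Proof. unfold h. replace (1 - (1 - p)) with p by ring. ring. Qed.

Lemma h_0 : h 0 = 0.
Proof. unfold h, log2. replace (1 - 0) with 1 by ring. rewrite ln_1. field. apply Rgt_not_eq, ln2_pos. Qed.

Lemma h_1 : h 1 = 0.
Proof. replace 1 with (1 - 0) by ring. rewrite h_sym. apply h_0. Qed.

Lemma h_half : h (/ 2) = 1.
Proof.
  unfold h, log2. replace (1 - / 2) with (/ 2) by field. rewrite ln_Rinv by lra.
  assert (H := ln2_pos). field. lra.
Qed.

Lemma h_pos p : 0 < p < 1 -> 0 < h p.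
Proof.
  intros. unfold h, log2. assert (H2 := ln2_pos).
  assert (ln p < 0) by (apply ln_lt_0; lra). assert (ln (1 - p) < 0) by (apply ln_lt_0; lra).
  assert (0 < - p * ln p) by nra. assert (0 < (1 - p) * - ln (1 - p)) by nra.
  replace (- p * (ln p / ln 2) - (1 - p) * (ln (1 - p) / ln 2))
    with ((- p * ln p + (1 - p) * - ln (1 - p)) / ln 2) by (field; lra).
  apply Rdiv_lt_0_compat; lra.
Qed.

(* 0 <= h <= 1 on [0,1]; the upper bound is ln y <= y - 1 at y = 1/(2p), 1/(2(1-p)). *)
Lemma h_range p : 0 <= p <= 1 -> 0 <= h p <= 1.
Proof.
  intros Hp. destruct (Req_dec p 0) as [->|]; [rewrite h_0; lra|].
  destruct (Req_dec p 1) as [->|]; [rewrite h_1; lra|].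
  split; [left; apply h_pos; lra|].
  unfold h, log2. assert (H2 := ln2_pos).
  assert (A := ln_le_pred (/ (2 * p)) ltac:(apply Rinv_0_lt_compat; lra)).
  assert (B := ln_le_pred (/ (2 * (1 - p))) ltac:(apply Rinv_0_lt_compat; lra)).
  rewrite ln_Rinv, ln_mult in A, B by lra.
  assert (A' : p * (- (ln 2 + ln p)) <= p * (/ (2 * p) - 1)) by (apply Rmult_le_compat_l; lra).
  assert (B' : (1 - p) * (- (ln 2 + ln (1 - p))) <= (1 - p) * (/ (2 * (1 - p)) - 1))
    by (apply Rmult_le_compat_l; lra).
  replace (p * (/ (2 * p) - 1)) with (/ 2 - p) in A' by (field; lra).
  replace ((1 - p) * (/ (2 * (1 - p)) - 1)) with (/ 2 - (1 - p)) in B' by (field; lra).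
  replace (- p * (ln p / ln 2) - (1 - p) * (ln (1 - p) / ln 2))
    with ((- p * ln p - (1 - p) * ln (1 - p)) / ln 2) by (field; lra).
  apply (Rmult_le_reg_r (ln 2)); [lra|]. unfold Rdiv.
  rewrite Rmult_assoc, Rinv_l, Rmult_1_r by lra. nra.
Qed.

Lemma h_eq_0 p : 0 <= p <= 1 -> h p = 0 -> p = 0 \/ p = 1.
Proof.
  intros. destruct (Req_dec p 0); auto. destruct (Req_dec p 1); auto.
  assert (0 < h p) by (apply h_pos; lra). lra.
Qed.

Lemma h_sq_le t : 0 < t < 1 -> h (t * t) <= 3 * t / ln 2.
Proof.
  intros Ht. unfold h, log2. assert (H2 := ln2_pos).
  replace (- (t * t) * (ln (t * t) / ln 2) - (1 - t * t) * (ln (1 - t * t) / ln 2))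
    with ((- (t * t) * ln (t * t) - (1 - t * t) * ln (1 - t * t)) * / ln 2) by (field; lra).
  unfold Rdiv. apply Rmult_le_compat_r; [left; apply Rinv_0_lt_compat; lra|].
  assert (A : - (t * t) * ln (t * t) <= 2 * t).
  { rewrite ln_mult by lra.
    assert (B := ln_le_pred (/ t) ltac:(apply Rinv_0_lt_compat; lra)). rewrite ln_Rinv in B by lra.
    assert (t * t * (- ln t) <= t * t * (/ t - 1)) by (apply Rmult_le_compat_l; nra).
    replace (t * t * (/ t - 1)) with (t - t * t) in H by (field; lra). nra. }
  assert (C : - (1 - t * t) * ln (1 - t * t) <= t * t).
  { assert (B := ln_le_pred (/ (1 - t * t)) ltac:(apply Rinv_0_lt_compat; nra)).
    rewrite ln_Rinv in B by nra.
    assert ((1 - t * t) * (- ln (1 - t * t)) <= (1 - t * t) * (/ (1 - t * t) - 1))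
      by (apply Rmult_le_compat_l; nra).
    replace ((1 - t * t) * (/ (1 - t * t) - 1)) with (t * t) in H by (field; nra). nra. }
  nra.
Qed.

(* Every value of [0,1] is an entropy h(e) with e in [0,1/2] (intermediate
   value theorem on [t^2, 1/2] for t small), so hinv is a genuine inverse. *)
Lemma hinv_spec v : 0 <= v <= 1 -> 0 <= hinv v <= / 2 /\ h (hinv v) = v.
Proof.
  intros Hv. unfold hinv. apply epsilon_spec.
  destruct (Req_dec v 0) as [->|Hv0]; [exists 0; split; [lra|apply h_0]|].
  destruct (Req_dec v 1) as [->|Hv1]; [exists (/ 2); split; [lra|apply h_half]|].
  assert (H2 := ln2_pos).
  set (t := Rmin (/ 2) (v * ln 2 / 6)).
  assert (Ht1 : 0 < t) by (apply Rmin_glb_lt; [lra|apply Rdiv_lt_0_compat; nra]).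
  assert (Ht2 : t <= / 2) by apply Rmin_l.
  assert (Ht3 : t <= v * ln 2 / 6) by apply Rmin_r.
  assert (Hsmall : h (t * t) < v).
  { apply (Rle_lt_trans _ _ _ (h_sq_le t ltac:(lra))).
    apply (Rmult_le_compat_r (3 / ln 2)) in Ht3; [|apply Rdiv_le_0_compat; lra].
    replace (v * ln 2 / 6 * (3 / ln 2)) with (v / 2) in Ht3 by (field; lra).
    replace (3 * t / ln 2) with (t * (3 / ln 2)) by (field; lra). lra. }
  destruct (IVT_interv (fun x => h x - v) (t * t) (/ 2)) as [z [Hz1 Hz2]].
  - intros a Ha. apply continuity_pt_minus; [|apply continuity_pt_const; intros ? ?; reflexivity].
    apply derivable_continuous_pt. exists (log_odds a / ln 2).
    apply is_derive_Reals, h_derive. nra.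
  - nra.
  - lra.
  - rewrite h_half. lra.
  - exists z. split; [nra|lra].
Qed.

(** * Gallager's function of the binary symmetric channel *)

(* F(rho) of the BSC with crossover p: 2^-r (p^s + (1-p)^s)^(1+r), s = 1/(1+r).
   It is the column function of every binary-input channel (see colF below). *)
Definition bsc_F (r p : R) : R :=
  Rpower 2 (- r) * Rpower (rpow p (/ (1 + r)) + rpow (1 - p) (/ (1 + r))) (1 + r).

Lemma rpow_pos x y : 0 < x -> rpow x y = exp (y * ln x).
Proof. intros. unfold rpow. destruct (Rle_dec x 0); [lra|reflexivity]. Qed.

Lemma rpow_0 y : rpow 0 y = 0.
Proof. unfold rpow. destruct (Rle_dec 0 0); [reflexivity|lra]. Qed.

Lemma bsc_F_sym r p : bsc_F r (1 - p) = bsc_F r p.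
Proof. unfold bsc_F. replace (1 - (1 - p)) with p by ring. rewrite (Rplus_comm (rpow p _)). reflexivity. Qed.

Lemma bsc_F_0 r : bsc_F r 0 = Rpower 2 (- r).
Proof.
  unfold bsc_F. rewrite rpow_0. replace (1 - 0) with 1 by ring.
  rewrite rpow_pos by lra. rewrite ln_1, Rmult_0_r, exp_0, Rplus_0_l.
  unfold Rpower at 2. rewrite ln_1, Rmult_0_r, exp_0. ring.
Qed.

Lemma bsc_F_1 r : bsc_F r 1 = Rpower 2 (- r).
Proof. replace 1 with (1 - 0) by ring. rewrite bsc_F_sym. apply bsc_F_0. Qed.

Lemma bsc_F_r0 p : 0 <= p <= 1 -> bsc_F 0 p = 1.
Proof.
  intros Hp. unfold bsc_F. replace (/ (1 + 0)) with 1 by field. replace (1 + 0) with 1 by ring.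
  replace (- 0) with 0 by ring. rewrite Rpower_O by lra.
  assert (E : forall x, 0 <= x -> rpow x 1 = x).
  { intros x Hx. destruct (Req_dec x 0) as [->|]; [apply rpow_0|].
    rewrite rpow_pos by lra. rewrite Rmult_1_l. apply exp_ln. lra. }
  rewrite !E by lra. replace (p + (1 - p)) with 1 by ring. rewrite Rpower_1 by lra. ring.
Qed.

(* On the open interval, bsc_F is a composition of exp and ln. *)
Definition bsc_F_smooth (r p : R) : R :=
  exp (- r * ln 2 + (1 + r) * ln (exp (/ (1 + r) * ln p) + exp (/ (1 + r) * ln (1 - p)))).

Lemma bsc_F_smooth_eq r p : 0 < p < 1 -> bsc_F r p = bsc_F_smooth r p.
Proof.
  intros. unfold bsc_F, bsc_F_smooth. rewrite !rpow_pos by lra. unfold Rpower.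
  rewrite <- exp_plus. f_equal; ring.
Qed.

Lemma bsc_F_half r : -1 < r -> bsc_F r (/ 2) = 1.
Proof.
  intros Hr. rewrite bsc_F_smooth_eq by lra. unfold bsc_F_smooth.
  replace (1 - / 2) with (/ 2) by field. rewrite ln_Rinv by lra.
  replace (exp (/ (1 + r) * - ln 2) + exp (/ (1 + r) * - ln 2))
    with (exp ((1 - / (1 + r)) * ln 2)).
  2:{ replace ((1 - / (1 + r)) * ln 2) with (ln 2 + / (1 + r) * - ln 2) by ring.
      rewrite exp_plus, exp_ln by lra. ring. }
  rewrite ln_exp. replace (- r * ln 2 + (1 + r) * ((1 - / (1 + r)) * ln 2)) with 0 by (field; lra).
  apply exp_0.
Qed.

(* F of a BSC is at least that of the noiseless channel: p^s >= p for s <= 1. *)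
Lemma bsc_F_smooth_ge r p : 0 <= r -> 0 < p < 1 -> exp (- r * ln 2) <= bsc_F_smooth r p.
Proof.
  intros Hr Hp. unfold bsc_F_smooth.
  set (s := / (1 + r)).
  assert (Hs : 0 < s <= 1).
  { unfold s. split; [apply Rinv_0_lt_compat; lra|].
    rewrite <- Rinv_1. apply Rinv_le_contravar; lra. }
  assert (Hpow : forall q, 0 < q < 1 -> q <= exp (s * ln q)).
  { intros q Hq. assert (ln q < 0) by (apply ln_lt_0; lra).
    rewrite <- (exp_ln q) at 1 by lra. apply exp_le_mono. nra. }
  assert (H1 := Hpow p Hp). assert (H2 := Hpow (1 - p) ltac:(lra)).
  assert (0 <= ln (exp (s * ln p) + exp (s * ln (1 - p)))) by (rewrite <- ln_1; apply ln_le; lra).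
  apply exp_le_mono. nra.
Qed.

(** * Concavity of the BSC function in the entropy coordinate *)

Definition bsc_F_deriv (r p : R) : R :=
  exp (- r * ln 2) * exp (r * ln (1 + exp (/ (1 + r) * log_odds p)))
  * (1 - exp (- (r / (1 + r)) * log_odds p)).

Lemma bsc_F_deriv_eq r p : -1 < r -> 0 < p < 1 ->
  let U := exp (/ (1 + r) * ln p) + exp (/ (1 + r) * ln (1 - p)) in
  bsc_F_smooth r p * (exp (/ (1 + r) * ln p) / p - exp (/ (1 + r) * ln (1 - p)) / (1 - p)) / U
  = bsc_F_deriv r p.
Proof.
  intros Hr Hp U. unfold bsc_F_smooth, bsc_F_deriv, log_odds. fold U.
  set (s := / (1 + r)) in *. set (a := r / (1 + r)).
  assert (Hsa : s - 1 = - a) by (unfold s, a; field; lra).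
  assert (Hrs : r * s = a) by (unfold a, s; field; lra).
  assert (HU : 0 < U) by (unfold U; assert (H1 := exp_pos (s * ln p)); assert (H2 := exp_pos (s * ln (1 - p))); lra).
  assert (Ediv : forall q, 0 < q -> exp (s * ln q) / q = exp (- a * ln q)).
  { intros q Hq. rewrite <- (exp_ln q) at 2 by lra. unfold Rdiv.
    rewrite <- exp_Ropp, <- exp_plus. f_equal. rewrite <- Hsa; ring. }
  assert (E1 : 1 + exp (s * (ln (1 - p) - ln p)) = U * exp (- (s * ln p))).
  { unfold U. rewrite Rmult_plus_distr_r, <- !exp_plus.
    replace (s * ln p + - (s * ln p)) with 0 by ring. rewrite exp_0. f_equal. f_equal. ring. }
  assert (EU : exp (- r * ln 2 + (1 + r) * ln U) / U = exp (- r * ln 2) * exp (r * ln U)).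
  { rewrite <- (exp_ln U) at 2 by lra. unfold Rdiv. rewrite <- exp_Ropp, <- !exp_plus. f_equal. ring. }
  rewrite E1, ln_mult, ln_exp by (try apply exp_pos; lra).
  replace (exp (- r * ln 2 + (1 + r) * ln U) * (exp (s * ln p) / p - exp (s * ln (1 - p)) / (1 - p)) / U)
    with ((exp (- r * ln 2 + (1 + r) * ln U) / U) * (exp (s * ln p) / p - exp (s * ln (1 - p)) / (1 - p)))
    by (field; lra).
  rewrite EU, !Ediv by lra.
  replace (r * (ln U + - (s * ln p))) with (r * ln U + - a * ln p) by (rewrite <- Hrs; ring).
  replace (- a * (ln (1 - p) - ln p)) with (- a * ln (1 - p) + a * ln p) by ring.
  rewrite !exp_plus.
  assert (Eag : exp (- a * ln p) * exp (a * ln p) = 1).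
  { rewrite <- exp_plus. replace (- a * ln p + a * ln p) with 0 by ring. apply exp_0. }
  transitivity (exp (- r * ln 2) * exp (r * ln U)
    * (exp (- a * ln p) - exp (- a * ln (1 - p)) * (exp (- a * ln p) * exp (a * ln p)))).
  { rewrite Eag. ring. }
  ring.
Qed.

Lemma bsc_F_smooth_derive r p : -1 < r -> 0 < p < 1 ->
  is_derive (bsc_F_smooth r) p (bsc_F_deriv r p).
Proof.
  intros Hr Hp. rewrite <- (bsc_F_deriv_eq r p Hr Hp). unfold bsc_F_smooth.
  assert (H1 := exp_pos (/ (1 + r) * ln p)). assert (H2 := exp_pos (/ (1 + r) * ln (1 - p))).
  auto_derive; replace (1 + - p) with (1 - p) by ring.
  - repeat split; lra.
  - field. repeat split; lra.
Qed.

Lemma bsc_F_deriv_pos r p : 0 < r -> 0 < p < / 2 -> 0 < bsc_F_deriv r p.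
Proof.
  intros Hr Hp. unfold bsc_F_deriv.
  assert (HX := log_odds_pos p Hp).
  assert (0 < r / (1 + r) * log_odds p) by (apply Rmult_lt_0_compat; [apply Rdiv_lt_0_compat|]; lra).
  assert (exp (- (r / (1 + r)) * log_odds p) < 1) by (apply exp_lt_1; lra).
  assert (G1 := exp_pos (- r * ln 2)).
  assert (G2 := exp_pos (r * ln (1 + exp (/ (1 + r) * log_odds p)))).
  apply Rmult_lt_0_compat; [apply Rmult_lt_0_compat|]; lra.
Qed.

(* ln of the slope dF/dh, as a function of the log-odds x (up to a constant). *)
Definition slope_profile (r x : R) : R :=
  r * ln (1 + exp (/ (1 + r) * x)) + ln (1 - exp (- (r / (1 + r)) * x)) - ln x.

(* The key one-variable inequality: slope_profile r is nondecreasing on x > 0.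
   Its derivative is a E/(1+E) + a/(e-1) - 1/x with a = r/(1+r), E >= 1 and
   e = e^(a x); the bound exp_pade_bound at a x makes it nonnegative. *)
Lemma slope_profile_incr r x y : 0 < r -> 0 < x -> x <= y -> slope_profile r x <= slope_profile r y.
Proof.
  intros Hr Hx Hxy.
  set (s := / (1 + r)). set (a := r / (1 + r)).
  assert (Hs : 0 < s) by (unfold s; apply Rinv_0_lt_compat; lra).
  assert (Ha : 0 < a) by (unfold a; apply Rdiv_lt_0_compat; lra).
  assert (Hrs : r * s = a) by (unfold a, s; field; lra).
  apply (nondecreasing_of_derive (slope_profile r)
    (fun c => r * (s * exp (s * c)) / (1 + exp (s * c)) + a * exp (- a * c) / (1 - exp (- a * c)) - / c));
    [lra| |].
  { intros c Hc. unfold slope_profile. fold s a.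
    assert (exp (- a * c) < 1) by (apply exp_lt_1; nra). assert (H0 := exp_pos (- a * c)).
    assert (0 < exp (s * c)) by apply exp_pos.
    auto_derive; repeat split; try lra. field; lra. }
  intros c Hc.
  set (E := exp (s * c)). set (e := exp (a * c)).
  assert (HE : 1 <= E) by (unfold E; rewrite <- exp_0; apply exp_le_mono; nra).
  assert (He : 1 < e) by (unfold e; rewrite <- exp_0; apply exp_increasing; nra).
  assert (Hem : exp (- a * c) = / e) by (unfold e; rewrite <- exp_Ropp; f_equal; ring).
  assert (Hpade := exp_pade_bound (a * c) ltac:(nra)). fold e in Hpade.
  rewrite Hem.
  replace (r * (s * E) / (1 + E)) with (a * E / (1 + E)) by (rewrite <- Hrs; field; lra).
  replace (a * / e / (1 - / e)) with (a / (e - 1)) by (field; lra).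
  assert (a / 2 <= a * E / (1 + E)).
  { apply (Rmult_le_reg_r (2 * (1 + E))); [lra|].
    replace (a / 2 * (2 * (1 + E))) with (a * (1 + E)) by field.
    replace (a * E / (1 + E) * (2 * (1 + E))) with (2 * a * E) by (field; lra). nra. }
  assert (0 <= a / 2 + a / (e - 1) - / c).
  { apply (Rmult_le_reg_r (2 * c * (e - 1))); [nra|]. rewrite Rmult_0_l.
    replace ((a / 2 + a / (e - 1) - / c) * (2 * c * (e - 1)))
      with (a * c * (e - 1) + 2 * a * c - 2 * (e - 1)) by (field; lra).
    nra. }
  lra.
Qed.

Definition entropy_slope (r p : R) : R := bsc_F_deriv r p / (log_odds p / ln 2).

Lemma entropy_slope_eq r p : 0 < r -> 0 < p < / 2 ->
  entropy_slope r p = ln 2 * exp (- r * ln 2) * exp (slope_profile r (log_odds p)).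
Proof.
  intros Hr Hp. unfold entropy_slope, bsc_F_deriv, slope_profile.
  assert (HX := log_odds_pos p Hp). assert (H2 := ln2_pos).
  assert (0 < r / (1 + r) * log_odds p) by (apply Rmult_lt_0_compat; [apply Rdiv_lt_0_compat|]; lra).
  assert (exp (- (r / (1 + r)) * log_odds p) < 1) by (apply exp_lt_1; lra).
  assert (H3 := exp_pos (/ (1 + r) * log_odds p)).
  rewrite exp_sub, exp_plus, !exp_ln by lra. field. lra.
Qed.

Lemma entropy_slope_decr r p p' : 0 < r -> 0 < p -> p <= p' -> p' < / 2 ->
  entropy_slope r p' <= entropy_slope r p.
Proof.
  intros. rewrite !entropy_slope_eq by lra.
  assert (log_odds p' <= log_odds p)
    by (destruct (Req_dec p p'); [subst; lra|left; apply log_odds_decr; lra]).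
  assert (slope_profile r (log_odds p') <= slope_profile r (log_odds p))
    by (apply slope_profile_incr; auto; apply log_odds_pos; lra).
  assert (0 < ln 2 * exp (- r * ln 2)) by (apply Rmult_lt_0_compat; [apply ln2_pos|apply exp_pos]).
  apply Rmult_le_compat_l; [lra|]. apply exp_le_mono. lra.
Qed.

Lemma line_gap_derive r k c : -1 < r -> 0 < c < 1 ->
  is_derive (fun p => bsc_F_smooth r p - k * h p) c (bsc_F_deriv r c - k * (log_odds c / ln 2)).
Proof.
  intros Hr Hc. apply (is_derive_minus (bsc_F_smooth r) (fun p => k * h p)).
  - apply bsc_F_smooth_derive; lra.
  - apply (is_derive_scal h). apply h_derive; lra.
Qed.

Lemma line_gap_deriv_factor r k c : 0 < c < / 2 ->
  bsc_F_deriv r c - k * (log_odds c / ln 2) = (entropy_slope r c - k) * (log_odds c / ln 2)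
  /\ 0 < log_odds c / ln 2.
Proof.
  intros Hc. assert (HX := log_odds_pos c Hc). assert (H2 := ln2_pos).
  split; [unfold entropy_slope; field; lra|apply Rdiv_lt_0_compat; lra].
Qed.

Lemma line_of_slope_bounds r p0 k : 0 < r -> 0 < p0 <= / 2 ->
  (forall c, 0 < c < p0 -> k <= entropy_slope r c) ->
  (forall c, p0 < c < / 2 -> entropy_slope r c <= k) ->
  forall p, 0 < p <= / 2 -> bsc_F_smooth r p <= bsc_F_smooth r p0 + k * (h p - h p0).
Proof.
  intros Hr Hp0 Hleft Hright p Hp.
  destruct (Rle_dec p p0) as [Hle|Hgt].
  - enough (bsc_F_smooth r p - k * h p <= bsc_F_smooth r p0 - k * h p0) by lra.
    apply (nondecreasing_of_derive (fun x => bsc_F_smooth r x - k * h x)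
             (fun c => bsc_F_deriv r c - k * (log_odds c / ln 2)));
      [lra| intros c Hc; apply line_gap_derive; lra|].
    intros c Hc. destruct (line_gap_deriv_factor r k c ltac:(lra)) as [-> Hh].
    assert (k <= entropy_slope r c) by (apply Hleft; lra). nra.
  - enough (- (bsc_F_smooth r p0 - k * h p0) <= - (bsc_F_smooth r p - k * h p)) by lra.
    apply (nondecreasing_of_derive (fun x => - (bsc_F_smooth r x - k * h x))
             (fun c => - (bsc_F_deriv r c - k * (log_odds c / ln 2)))); [lra| |].
    + intros c Hc. apply (is_derive_opp (fun x => bsc_F_smooth r x - k * h x)).
      apply line_gap_derive; lra.
    + intros c Hc. destruct (line_gap_deriv_factor r k c ltac:(lra)) as [-> Hh].
      assert (entropy_slope r c <= k) by (apply Hright; lra). nra.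
Qed.

(* Concavity in h gives, at every p0 in (0,1/2], a supporting line of slope
   k = dF/dh(p0) >= 0 over (0,1/2] (slope 0 at the maximum p0 = 1/2). *)
Lemma supporting_line_open r p0 : 0 < r -> 0 < p0 <= / 2 ->
  exists k, 0 <= k /\
    forall p, 0 < p <= / 2 -> bsc_F_smooth r p <= bsc_F_smooth r p0 + k * (h p - h p0).
Proof.
  intros Hr Hp0. destruct (Req_dec p0 (/ 2)) as [Hhalf|Hne].
  - exists 0. split; [lra|]. apply line_of_slope_bounds; [lra|lra| |intros; lra].
    intros c Hc. assert (Hd := bsc_F_deriv_pos r c Hr ltac:(lra)).
    destruct (line_gap_deriv_factor r 0 c ltac:(lra)) as [E Hh]. nra.
  - exists (entropy_slope r p0). split.
    + destruct (line_gap_deriv_factor r 0 p0 ltac:(lra)) as [E Hh].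
      assert (Hd := bsc_F_deriv_pos r p0 Hr ltac:(lra)). nra.
    + apply line_of_slope_bounds; [lra|lra| |]; intros c Hc; apply entropy_slope_decr; lra.
Qed.

(* A line lying above bsc_F on (0,1/2] also lies above it at p = 0:
   bsc_F >= 2^-r everywhere while h(t^2) -> 0. *)
Lemma line_above_at_0 r A k : 0 <= r -> 0 <= k ->
  (forall p, 0 < p <= / 2 -> bsc_F_smooth r p <= A + k * h p) -> Rpower 2 (- r) <= A.
Proof.
  intros Hr Hk Hline. apply Rnot_lt_le. intros Hlt.
  unfold Rpower in Hlt. replace (ln 2 * - r) with (- r * ln 2) in Hlt by ring.
  set (D := exp (- r * ln 2) - A) in *. assert (HD : 0 < D) by (unfold D; lra).
  assert (H2 := ln2_pos).
  set (t := Rmin (/ 2) (D * ln 2 / (6 * k + 1))).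
  assert (Ht1 : 0 < t) by (apply Rmin_glb_lt; [lra|apply Rdiv_lt_0_compat; nra]).
  assert (Ht2 : t <= / 2) by apply Rmin_l.
  assert (Ht3 : t <= D * ln 2 / (6 * k + 1)) by apply Rmin_r.
  assert (G1 := Hline (t * t) ltac:(nra)).
  assert (G2 := bsc_F_smooth_ge r (t * t) Hr ltac:(nra)).
  assert (G3 : k * h (t * t) <= k * (3 * t / ln 2))
    by (apply Rmult_le_compat_l; [lra|apply h_sq_le; lra]).
  assert (G4 : k * (3 * t / ln 2) < D).
  { apply (Rmult_le_compat_r ((6 * k + 1) / ln 2)) in Ht3; [|apply Rdiv_le_0_compat; lra].
    replace (D * ln 2 / (6 * k + 1) * ((6 * k + 1) / ln 2)) with D in Ht3 by (field; lra).
    replace (k * (3 * t / ln 2)) with (t * ((6 * k + 1) / ln 2) / 2 - t / ln 2 / 2) by (field; lra).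
    assert (0 < t / ln 2 / 2) by (apply Rdiv_lt_0_compat; [apply Rdiv_lt_0_compat|]; lra).
    lra. }
  unfold D in *. lra.
Qed.

Lemma bsc_F_supporting_line r p0 : 0 <= r -> 0 < p0 <= / 2 ->
  exists k, 0 <= k /\ forall p, 0 <= p <= 1 -> bsc_F r p <= bsc_F r p0 + k * (h p - h p0).
Proof.
  intros Hr Hp0. destruct (Req_dec r 0) as [->|Hr0].
  { exists 0. split; [lra|]. intros p Hp. rewrite !bsc_F_r0 by lra. lra. }
  destruct (supporting_line_open r p0 ltac:(lra) Hp0) as [k [Hk Hline]].
  exists k. split; [exact Hk|].
  assert (Hhalf : forall p, 0 <= p <= / 2 -> bsc_F r p <= bsc_F r p0 + k * (h p - h p0)).
  { intros p Hp. rewrite (bsc_F_smooth_eq r p0) by lra.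
    destruct (Req_dec p 0) as [->|Hne].
    - rewrite bsc_F_0, h_0.
      enough (Rpower 2 (- r) <= bsc_F_smooth r p0 - k * h p0) by lra.
      apply (line_above_at_0 r _ k); [lra|lra|].
      intros q Hq. assert (G := Hline q Hq). lra.
    - rewrite bsc_F_smooth_eq by lra. apply Hline. lra. }
  intros p Hp. destruct (Rle_dec p (/ 2)); [apply Hhalf; lra|].
  rewrite <- bsc_F_sym, <- h_sym. apply Hhalf; lra.
Qed.

(* Chord bound: bsc_F r lies above the segment joining (h = 0, 2^-r) and
   (h = 1, 1); this is the BEC value 1 - (1 - 2^-r) C at C = 1 - h p. *)
Lemma bsc_F_above_chord r p : 0 <= r -> 0 <= p <= 1 ->
  1 - (1 - Rpower 2 (- r)) * (1 - h p) <= bsc_F r p.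
Proof.
  intros Hr Hp.
  assert (Hhalf : forall p, 0 <= p <= / 2 -> 1 - (1 - Rpower 2 (- r)) * (1 - h p) <= bsc_F r p).
  { clear p Hp. intros p Hp. destruct (Req_dec p 0) as [->|Hne]; [rewrite h_0, bsc_F_0; lra|].
    destruct (bsc_F_supporting_line r p Hr ltac:(lra)) as [k [Hk Hline]].
    assert (G0 := Hline 0 ltac:(lra)). assert (G1 := Hline (/ 2) ltac:(lra)).
    rewrite bsc_F_0, h_0 in G0. rewrite bsc_F_half, h_half in G1 by lra.
    assert (Hh := h_range p ltac:(lra)).
    assert (G2 : (1 - h p) * Rpower 2 (- r) <= (1 - h p) * (bsc_F r p + k * (0 - h p)))
      by (apply Rmult_le_compat_l; lra).
    assert (G3 : h p * 1 <= h p * (bsc_F r p + k * (1 - h p))) by (apply Rmult_le_compat_l; lra).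
    nra. }
  destruct (Rle_dec p (/ 2)); [apply Hhalf; lra|].
  rewrite <- bsc_F_sym, <- h_sym. apply Hhalf; lra.
Qed.

(** * Decomposition of a binary-input channel into columns *)

Definition column_F (r a b : R) : R :=
  / 2 * (if Rlt_dec 0 a then a * Rpower ((/ 2 * (rpow a (/ (1 + r)) + rpow b (/ (1 + r))))
                                          / rpow a (/ (1 + r))) r else 0) +
  / 2 * (if Rlt_dec 0 b then b * Rpower ((/ 2 * (rpow a (/ (1 + r)) + rpow b (/ (1 + r))))
                                          / rpow b (/ (1 + r))) r else 0).

Definition column_C (a b : R) : R :=
  / 2 * (if Rlt_dec 0 a then a * log2 (a / (/ 2 * (a + b))) else 0) +
  / 2 * (if Rlt_dec 0 b then b * log2 (b / (/ 2 * (a + b))) else 0).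

(* For a column with positive entries both column_F and the weighted BSC value
   equal M^(1+r), where M = (a^s + b^s)/2 and s = 1/(1+r). *)
Lemma column_F_pos r a b : -1 < r -> 0 < a -> 0 < b ->
  column_F r a b =
  exp ((1 + r) * ln (/ 2 * (exp (/ (1 + r) * ln a) + exp (/ (1 + r) * ln b)))).
Proof.
  intros Hr Ha Hb. unfold column_F.
  destruct (Rlt_dec 0 a); [|lra]. destruct (Rlt_dec 0 b); [|lra].
  rewrite !rpow_pos by lra.
  set (s := / (1 + r)). set (M := / 2 * (exp (s * ln a) + exp (s * ln b))).
  assert (HM : 0 < M) by (unfold M; assert (H1 := exp_pos (s * ln a)); assert (H2 := exp_pos (s * ln b)); lra).
  (* x (M / x^s)^r = x^s M^r, since 1 - r s = s *)
  assert (Eterm : forall x, 0 < x -> x * Rpower (M / exp (s * ln x)) r = exp (s * ln x) * exp (r * ln M)).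
  { intros x Hx. unfold Rpower. rewrite ln_div, ln_exp by (try apply exp_pos; lra).
    rewrite <- (exp_ln x) at 1 by lra. rewrite <- !exp_plus. f_equal. unfold s. field. lra. }
  rewrite !Eterm by lra.
  transitivity (M * exp (r * ln M)); [unfold M; ring|].
  rewrite <- (exp_ln M) at 1 by lra. rewrite <- exp_plus. f_equal. ring.
Qed.

Lemma bsc_F_weighted_pos r a b : -1 < r -> 0 < a -> 0 < b ->
  (a + b) / 2 * bsc_F r (a / (a + b)) =
  exp ((1 + r) * ln (/ 2 * (exp (/ (1 + r) * ln a) + exp (/ (1 + r) * ln b)))).
Proof.
  intros Hr Ha Hb.
  assert (Hp : 0 < a / (a + b) < 1).
  { split; [apply Rdiv_lt_0_compat; lra|]. apply (Rmult_lt_reg_r (a + b)); [lra|].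
    unfold Rdiv. rewrite Rmult_assoc, Rinv_l; lra. }
  rewrite bsc_F_smooth_eq by exact Hp. unfold bsc_F_smooth.
  replace (1 - a / (a + b)) with (b / (a + b)) by (field; lra).
  set (s := / (1 + r)). set (t := a + b).
  set (M := / 2 * (exp (s * ln a) + exp (s * ln b))).
  assert (HM : 0 < M) by (unfold M; assert (H1 := exp_pos (s * ln a)); assert (H2 := exp_pos (s * ln b)); lra).
  rewrite !ln_div by (unfold t; lra).
  replace (exp (s * (ln a - ln t)) + exp (s * (ln b - ln t))) with (2 * (M * exp (- s * ln t))).
  2:{ unfold M. replace (s * (ln a - ln t)) with (s * ln a + - s * ln t) by ring.
      replace (s * (ln b - ln t)) with (s * ln b + - s * ln t) by ring. rewrite !exp_plus. field. }
  assert (Hexp := exp_pos (- s * ln t)).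
  assert (0 < M * exp (- s * ln t)) by (apply Rmult_lt_0_compat; lra).
  rewrite ln_mult, ln_mult, ln_exp by lra.
  replace (t / 2) with (exp (ln t - ln 2)) by (rewrite exp_sub, !exp_ln by (unfold t; lra); field).
  rewrite <- exp_plus. f_equal. unfold s. field. lra.
Qed.

Lemma column_F_eq r a b : -1 < r -> 0 <= a -> 0 <= b -> 0 < a + b ->
  column_F r a b = (a + b) / 2 * bsc_F r (a / (a + b)).
Proof.
  intros Hr Ha Hb Ht.
  assert (Hone : forall x, 0 < x -> / 2 * rpow x (/ (1 + r)) / rpow x (/ (1 + r)) = / 2).
  { intros x Hx. assert (0 < rpow x (/ (1 + r))) by (rewrite rpow_pos by lra; apply exp_pos).
    field. lra. }
  assert (Hhalf : Rpower (/ 2) r = Rpower 2 (- r))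
    by (unfold Rpower; rewrite ln_Rinv by lra; f_equal; ring).
  destruct (Req_dec a 0) as [->|Ha0]; [|destruct (Req_dec b 0) as [->|Hb0]].
  - unfold column_F. destruct (Rlt_dec 0 0); [lra|]. destruct (Rlt_dec 0 b); [|lra].
    rewrite rpow_0, Rplus_0_l, Hone, Hhalf by lra.
    replace (0 / (0 + b)) with 0 by (field; lra). rewrite bsc_F_0. field.
  - unfold column_F. destruct (Rlt_dec 0 0); [lra|]. destruct (Rlt_dec 0 a); [|lra].
    rewrite rpow_0, Rplus_0_r, Hone, Hhalf by lra.
    replace (a / (a + 0)) with 1 by (field; lra). rewrite bsc_F_1. field.
  - rewrite column_F_pos, bsc_F_weighted_pos by lra. reflexivity.
Qed.

Lemma column_C_eq a b : 0 <= a -> 0 <= b -> 0 < a + b ->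
  column_C a b = (a + b) / 2 * (1 - h (a / (a + b))).
Proof.
  intros Ha Hb Ht. assert (H2 := ln2_pos). unfold column_C.
  destruct (Req_dec a 0) as [->|Ha0]; [|destruct (Req_dec b 0) as [->|Hb0]].
  - destruct (Rlt_dec 0 0); [lra|]. destruct (Rlt_dec 0 b); [|lra].
    replace (0 / (0 + b)) with 0 by (field; lra). rewrite h_0.
    replace (b / (/ 2 * (0 + b))) with 2 by (field; lra). unfold log2. field. lra.
  - destruct (Rlt_dec 0 0); [lra|]. destruct (Rlt_dec 0 a); [|lra].
    replace (a / (a + 0)) with 1 by (field; lra). rewrite h_1.
    replace (a / (/ 2 * (a + 0))) with 2 by (field; lra). unfold log2. field. lra.
  - destruct (Rlt_dec 0 a); [|lra]. destruct (Rlt_dec 0 b); [|lra].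
    unfold h. replace (1 - a / (a + b)) with (b / (a + b)) by (field; lra).
    unfold log2. rewrite !ln_div, ln_mult, ln_Rinv by lra.
    field. split; lra.
Qed.

Lemma column_F_00 r : column_F r 0 0 = 0.
Proof. unfold column_F. destruct (Rlt_dec 0 0); [lra|]. ring. Qed.

Lemma column_C_00 : column_C 0 0 = 0.
Proof. unfold column_C. destruct (Rlt_dec 0 0); [lra|]. ring. Qed.

Lemma crossover_range a b : 0 <= a -> 0 <= b -> 0 < a + b -> 0 <= a / (a + b) <= 1.
Proof.
  intros. split; [apply Rdiv_le_0_compat; lra|].
  apply (Rmult_le_reg_r (a + b)); [lra|]. unfold Rdiv. rewrite Rmult_assoc, Rinv_l; lra.
Qed.

Lemma column_C_range a b : 0 <= a -> 0 <= b -> 0 <= column_C a b <= (a + b) / 2.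
Proof.
  intros Ha Hb. destruct (Req_dec (a + b) 0).
  { replace a with 0 by lra. replace b with 0 by lra. rewrite column_C_00. lra. }
  rewrite column_C_eq by lra. assert (Hh := h_range _ (crossover_range a b Ha Hb ltac:(lra))).
  split; [apply Rmult_le_pos; lra|]. assert (0 <= (a + b) / 2) by lra. nra.
Qed.

Lemma column_F_ge_chord r a b : 0 <= r -> 0 <= a -> 0 <= b ->
  (a + b) / 2 - (1 - Rpower 2 (- r)) * column_C a b <= column_F r a b.
Proof.
  intros Hr Ha Hb. destruct (Req_dec (a + b) 0).
  { replace a with 0 by lra. replace b with 0 by lra. rewrite column_F_00, column_C_00. lra. }
  rewrite column_F_eq, column_C_eq by lra.
  assert (G := bsc_F_above_chord r _ Hr (crossover_range a b Ha Hb ltac:(lra))).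
  assert (0 <= (a + b) / 2) by lra. nra.
Qed.

Lemma column_F_le_line r a b p0 k : -1 < r -> 0 <= a -> 0 <= b ->
  (forall p, 0 <= p <= 1 -> bsc_F r p <= bsc_F r p0 + k * (h p - h p0)) ->
  column_F r a b <= (a + b) / 2 * (bsc_F r p0 - k * h p0 + k) - k * column_C a b.
Proof.
  intros Hr Ha Hb Hline. destruct (Req_dec (a + b) 0).
  { replace a with 0 by lra. replace b with 0 by lra. rewrite column_F_00, column_C_00. lra. }
  rewrite column_F_eq, column_C_eq by lra.
  assert (G := Hline _ (crossover_range a b Ha Hb ltac:(lra))).
  assert (0 <= (a + b) / 2) by lra. nra.
Qed.

(* A column carrying full capacity (C = weight) is noiseless: h(p) = 0. *)
Lemma column_F_noiseless r a b : -1 < r -> 0 <= a -> 0 <= b -> column_C a b = (a + b) / 2 ->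
  column_F r a b = (a + b) / 2 * Rpower 2 (- r).
Proof.
  intros Hr Ha Hb HC. destruct (Req_dec (a + b) 0).
  { replace a with 0 by lra. replace b with 0 by lra. rewrite column_F_00. lra. }
  rewrite column_F_eq by lra. rewrite column_C_eq in HC by lra.
  assert (Hp := crossover_range a b Ha Hb ltac:(lra)).
  assert (Hh0 : h (a / (a + b)) = 0).
  { assert ((a + b) / 2 * h (a / (a + b)) = 0) by lra.
    apply Rmult_integral in H0. destruct H0; lra. }
  destruct (h_eq_0 _ Hp Hh0) as [E|E]; rewrite E; [rewrite bsc_F_0|rewrite bsc_F_1]; reflexivity.
Qed.

Definition lsum {A : Type} (f : A -> R) (l : list A) : R := fold_right Rplus 0 (map f l).

Lemma lsum_plus {A : Type} (f g : A -> R) l : lsum (fun y => f y + g y) l = lsum f l + lsum g l.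
Proof. induction l as [|a l IH]; unfold lsum in *; simpl; [ring|]. rewrite IH. ring. Qed.

Lemma lsum_scal {A : Type} c (f : A -> R) l : lsum (fun y => c * f y) l = c * lsum f l.
Proof. induction l as [|a l IH]; unfold lsum in *; simpl; [ring|]. rewrite IH. ring. Qed.

Lemma lsum_le {A : Type} (f g : A -> R) l :
  (forall y, In y l -> f y <= g y) -> lsum f l <= lsum g l.
Proof.
  induction l as [|a l IH]; intros H; unfold lsum in *; simpl; [lra|].
  assert (f a <= g a) by (apply H; left; reflexivity).
  assert (fold_right Rplus 0 (map f l) <= fold_right Rplus 0 (map g l))
    by (apply IH; intros; apply H; right; assumption).
  lra.
Qed.

Lemma lsum_ext {A : Type} (f g : A -> R) l :
  (forall y, In y l -> f y = g y) -> lsum f l = lsum g l.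
Proof. intros H. apply Rle_antisym; apply lsum_le; intros y Hy; rewrite H by exact Hy; lra. Qed.

Lemma lsum_nonneg {A : Type} (f : A -> R) l : (forall y, In y l -> 0 <= f y) -> 0 <= lsum f l.
Proof.
  induction l as [|a l IH]; intros H; unfold lsum in *; simpl; [lra|].
  assert (0 <= f a) by (apply H; left; reflexivity).
  assert (0 <= fold_right Rplus 0 (map f l)) by (apply IH; intros; apply H; right; assumption).
  lra.
Qed.

Lemma lsum_eq_0 {A : Type} (f : A -> R) l : (forall y, In y l -> 0 <= f y) ->
  lsum f l = 0 -> forall y, In y l -> f y = 0.
Proof.
  induction l as [|a l IH]; intros H Hs y Hy; [destruct Hy|].
  change (f a + lsum f l = 0) in Hs.
  assert (0 <= lsum f l) by (apply lsum_nonneg; intros; apply H; right; assumption).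
  assert (0 <= f a) by (apply H; left; reflexivity).
  destruct Hy as [<-|Hy]; [lra|]. apply IH; [intros; apply H; right; assumption|lra|exact Hy].
Qed.

(** * Gallager's function of a binary-input channel between those of the BEC and the BSC *)

Lemma F_bec_ge r C : 0 <= r -> 0 <= C <= 1 -> Rpower 2 (- r) <= F_bec r C.
Proof. intros Hr HC. unfold F_bec. assert (H := Rpower2_opp_le_1 r Hr). nra. Qed.

Section Channel.

Variables (n : nat) (W : bool -> nat -> R).
Hypothesis HW : is_channel n W.

Let weight (y : nat) : R := (W false y + W true y) / 2.
Let col_F (r : R) (y : nat) : R := column_F r (W false y) (W true y).
Let col_C (y : nat) : R := column_C (W false y) (W true y).

Lemma channel_nonneg x y : In y (seq 0 n) -> 0 <= W x y.
Proof. intros Hy. apply (proj1 HW). apply in_seq in Hy. lia. Qed.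

Lemma F_columns r : F n W r = lsum (col_F r) (seq 0 n).
Proof. unfold F, sumX, sumYpos, sumY, col_F, column_F. fold (@lsum nat). rewrite lsum_plus, !lsum_scal. reflexivity. Qed.

Lemma capacity_columns : capacity n W = lsum col_C (seq 0 n).
Proof. unfold capacity, sumX, sumYpos, sumY, col_C, column_C. fold (@lsum nat). rewrite lsum_plus, !lsum_scal. reflexivity. Qed.

Lemma weights_sum : lsum weight (seq 0 n) = 1.
Proof.
  destruct HW as [_ Hrow]. unfold weight.
  rewrite (lsum_ext _ (fun y => / 2 * (W false y + W true y))) by (intros; unfold Rdiv; ring).
  rewrite lsum_scal, lsum_plus. change (/ 2 * (sumY n (W false) + sumY n (W true)) = 1).
  rewrite !Hrow. field.
Qed.

Lemma capacity_range : 0 <= capacity n W <= 1.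
Proof.
  rewrite capacity_columns, <- weights_sum. split.
  - apply lsum_nonneg. intros y Hy. apply column_C_range; apply channel_nonneg; exact Hy.
  - apply lsum_le. intros y Hy. apply column_C_range; apply channel_nonneg; exact Hy.
Qed.

(* Summing the chord bound over the columns. *)
Lemma F_ge_bec r : 0 <= r -> F_bec r (capacity n W) <= F n W r.
Proof.
  intros Hr. rewrite F_columns, capacity_columns. unfold F_bec.
  assert (H : lsum (fun y => weight y + (- (1 - Rpower 2 (- r))) * col_C y) (seq 0 n)
              <= lsum (col_F r) (seq 0 n)).
  { apply lsum_le. intros y Hy.
    assert (G := column_F_ge_chord r _ _ Hr (channel_nonneg false y Hy) (channel_nonneg true y Hy)).
    unfold weight, col_C, col_F. lra. }
  rewrite lsum_plus, lsum_scal, weights_sum in H. lra.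
Qed.

(* A channel of capacity 1 has F = 2^-r: every column is noiseless. *)
Lemma F_full_capacity r : 0 <= r -> capacity n W = 1 -> F n W r = Rpower 2 (- r).
Proof.
  intros Hr HC. rewrite F_columns. rewrite capacity_columns in HC.
  assert (Hgap : forall y, In y (seq 0 n) -> weight y + (-1) * col_C y = 0).
  { apply lsum_eq_0.
    - intros y Hy. unfold weight, col_C.
      assert (G := column_C_range _ _ (channel_nonneg false y Hy) (channel_nonneg true y Hy)). lra.
    - rewrite lsum_plus, lsum_scal, weights_sum, HC. ring. }
  rewrite (lsum_ext _ (fun y => Rpower 2 (- r) * weight y)).
  - rewrite lsum_scal, weights_sum. ring.
  - intros y Hy. unfold col_F, weight. rewrite column_F_noiseless;
      [ring|lra|apply channel_nonneg..|]; try exact Hy.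
    assert (G := Hgap y Hy). unfold weight, col_C in G. lra.
Qed.

(* Jensen's inequality for the concave function bsc_F r of the entropy:
   summing the supporting line at e = h^-1(1 - C) over the columns. *)
Lemma F_le_bsc r : 0 <= r -> F n W r <= F_bsc r (capacity n W).
Proof.
  intros Hr. assert (HC := capacity_range).
  destruct (hinv_spec (1 - capacity n W) ltac:(lra)) as [He Hhe].
  change (F_bsc r (capacity n W)) with (bsc_F r (hinv (1 - capacity n W))).
  set (e := hinv (1 - capacity n W)) in *.
  destruct (Req_dec e 0) as [E0|Ene].
  { rewrite E0, h_0 in *. rewrite bsc_F_0. rewrite F_full_capacity by lra. lra. }
  destruct (bsc_F_supporting_line r e Hr ltac:(lra)) as [k [Hk Hline]].
  rewrite F_columns.
  assert (H : lsum (col_F r) (seq 0 n)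
              <= lsum (fun y => (bsc_F r e - k * h e + k) * weight y + (- k) * col_C y) (seq 0 n)).
  { apply lsum_le. intros y Hy.
    assert (G := column_F_le_line r _ _ e k ltac:(lra)
                   (channel_nonneg false y Hy) (channel_nonneg true y Hy) Hline).
    unfold weight, col_C, col_F. lra. }
  rewrite lsum_plus, !lsum_scal, weights_sum, <- capacity_columns, Hhe in H. lra.
Qed.

Lemma E0_between r : 0 <= r ->
  - log2 (F_bsc r (capacity n W)) <= E0 n W r /\
  E0 n W r <= - log2 (F_bec r (capacity n W)) /\
  - log2 (F_bec r (capacity n W)) <= r.
Proof.
  intros Hr. unfold E0.
  assert (Hbec := F_bec_ge r _ Hr capacity_range).
  assert (H2 := exp_pos (- r * ln 2)). change (exp (- r * ln 2)) with (Rpower 2 (- r)) in H2.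
  assert (HF := F_ge_bec r Hr). assert (HB := F_le_bsc r Hr).
  split; [|split].
  - assert (log2 (F n W r) <= log2 (F_bsc r (capacity n W))) by (apply log2_le; lra). lra.
  - assert (log2 (F_bec r (capacity n W)) <= log2 (F n W r)) by (apply log2_le; lra). lra.
  - assert (G := log2_le _ _ H2 Hbec). rewrite log2_Rpower2 in G. lra.
Qed.

End Channel.

Lemma max01_lub f B : (forall rho, 0 <= rho <= 1 -> f rho <= B) ->
  is_lub (fun v => exists rho, 0 <= rho <= 1 /\ v = f rho) (max01 f).
Proof.
  intros HB. unfold max01. apply epsilon_spec.
  destruct (completeness (fun v => exists rho, 0 <= rho <= 1 /\ v = f rho)) as [m Hm].
  - exists B. intros v [rho [Hr ->]]. apply HB; auto.
  - exists (f 0). exists 0. split; [lra|reflexivity].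
  - exists m; exact Hm.
Qed.

Lemma max01_le f g B : (forall rho, 0 <= rho <= 1 -> f rho <= g rho) ->
  (forall rho, 0 <= rho <= 1 -> g rho <= B) -> max01 f <= max01 g.
Proof.
  intros Hfg HB.
  destruct (max01_lub g B HB) as [Hg _].
  destruct (max01_lub f B ltac:(intros; apply (Rle_trans _ (g rho)); auto)) as [_ Hf].
  apply Hf. intros v [rho [Hr ->]].
  apply (Rle_trans _ (g rho)); [auto|]. apply Hg. exists rho; auto.
Qed.

Theorem mainTheorem8 (n : nat) (W : bool -> nat -> R) :
  is_channel n W -> gallager_symmetric n W ->
  forall Rt : R, 0 <= Rt ->
    Er_bsc Rt (capacity n W) <= Er n W Rt /\
    Er n W Rt <= Er_bec Rt (capacity n W).
Proof.
  intros HW _ Rt HRt.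
  (* all three objective functions are bounded by 1 on [0,1] *)
  assert (Hbounds := fun r (Hr : 0 <= r <= 1) => E0_between n W HW r (proj1 Hr)).
  split; [apply (max01_le _ _ 1)|apply (max01_le _ _ 1)]; intros r Hr;
    destruct (Hbounds r Hr) as [Hbsc [Hbec Hr1]]; nra.
Qed.
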